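(* For any $p\in(0,1)$, under the Alternating Path Randomized Design with parameter $p$, the Horvitz–Thompson estimator $\hat\tau_{\mathrm{AP}}$ is unbiased for the average treatment effect: $\mathbb{E}[\hat\tau_{\mathrm{AP}}]=\tau$.
   Context: Setting: $2N$ agents; $\mathbb{M}^t,\mathbb{M}^c$ are one-to-one matchings (sets of unordered pairs of distinct agents, each agent in at most one pair). Each pair $(a,b)$ has a fixed real potential outcome $Y_{a,b}$ (non-random; randomness comes only from the design). Estimand: $\tau=\frac1N\big(\sum_{(a,b)\in\mathbb{M}^t}Y_{a,b}-\sum_{(a,b)\in\mathbb{M}^c}Y_{a,b}\big)$. The disagreement set $\triangle\mathbb{M}^{(t,c)}=(\mathbb{M}^t\cup\mathbb{M}^c)\setminus(\mathbb{M}^t\cap\mathbb{M}^c)$, viewed as a graph, has connected components $\mathcal{P}_1,\dots,\mathcal{P}_m$, each an alternating path or cycle: a sequence $(v_{i,1},\dots,v_{i,k(i)+1})$ whose consecutive pairs $e_{i,j}=(v_{i,j},v_{i,j+1})$, $j=1,\dots,k(i)$, are the component's edges, alternating between $\triangle\mathbb{M}^{(t,c)}_t=\triangle\mathbb{M}^{(t,c)}\cap\mathbb{M}^t$ and $\triangle\mathbb{M}^{(t,c)}_c=\triangle\mathbb{M}^{(t,c)}\cap\mathbb{M}^c$; it is a cycle if $v_{i,1}=v_{i,k(i)+1}$, a path otherwise. Alternating Path Randomized Design with parameter $p$: indicators $W_{i,j}\in\{0,1\}$, independent across components; within $\mathcal{P}_i$, $\mathbb{P}(W_{i,1}=1)=p/(1+p)$;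 for $2\le j\le k(i)$ (path) or $2\le j\le k(i)-1$ (cycle), conditionally on $W_{i,1},\dots,W_{i,j-1}$, $W_{i,j}=1$ with probability $p$ if $W_{i,j-1}=0$ and $W_{i,j}=0$ if $W_{i,j-1}=1$; for a cycle, $W_{i,k(i)}=1$ iff $W_{i,1}=W_{i,k(i)-1}=0$. Horvitz–Thompson estimator: \[\hat\tau_{\mathrm{AP}}=\frac1N\sum_{i=1}^m\Big(\sum_{j:\,e_{i,j}\in\triangle\mathbb{M}^{(t,c)}_t}\frac{W_{i,j}Y_{e_{i,j}}}{\mathbb{P}(W_{i,j}=1)}-\sum_{j:\,e_{i,j}\in\triangle\mathbb{M}^{(t,c)}_c}\frac{W_{i,j}Y_{e_{i,j}}}{\mathbb{P}(W_{i,j}=1)}\Big).\] *)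

From HB Require Import structures.
From mathcomp Require Import all_boot all_order all_algebra.
Unset Printing Implicit Defensive.
Import Order.TTheory GRing.Theory Num.Theory.
Local Open Scope ring_scope.

Section AP.
Context {T : finType}.

Definition is_matching (M : {set {set T}}) : Prop :=
  (forall e, e \in M -> #|e| = 2%N) /\
  (forall e f, e \in M -> f \in M -> e != f -> [disjoint e & f]).

Definition disagree (Mt Mc : {set {set T}}) : {set {set T}} :=
  (Mt :|: Mc) :\: (Mt :&: Mc).

Definition edges (s : seq T) : seq {set T} :=
  if s is x :: s' then pairmap (fun a b => [set a; b]) x s' else [::].

Definition is_cycle (s : seq T) : bool :=
  if s is x :: s' then (s' != [::]) && (last x s' == x) else false.

Definition nedges (s : seq T) : nat := (size s).-1.

(** [cs] lists the connected components P_1, ..., P_m of the disagreement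
    graph, each as an alternating path or cycle (v_{i,1}, ..., v_{i,k(i)+1}). *)
Definition components_of (Mt Mc : {set {set T}}) (cs : seq (seq T)) : Prop :=
  [/\
      forall s, s \in cs -> (2 <= size s)%N /\
        (forall e, e \in edges s -> e \in disagree Mt Mc),
      forall s, s \in cs -> forall j, (j.+1 < nedges s)%N ->
        (nth set0 (edges s) j \in Mt) != (nth set0 (edges s) j.+1 \in Mt),
      forall s, s \in cs -> (if is_cycle s then uniq (behead s) else uniq s),
      forall i i', (i < size cs)%N -> (i' < size cs)%N -> i <> i' ->
        [disjoint (nth [::] cs i) & (nth [::] cs i')]
    &
      forall e, e \in disagree Mt Mc -> exists2 s, s \in cs & e \in edges s].

Context {R : realFieldType}.

(** One step of the chain: W_j given W_{j-1}. *)
Definition ap_step (p : R) (a b : bool) : R :=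
  if a then (if b then 0 else 1) else (if b then p else 1 - p).

(** Probability mass of the indicator vector w (0-based: w 0 = W_{i,1}, ...,
    w (k-1) = W_{i,k}) of one component with k edges under the Alternating Path
    Randomized Design; entries w j for j >= k are padding and must be false. *)
Definition comp_pmf (p : R) (k : nat) (cyc : bool) (w : nat -> bool) : R :=
  (if w 0%N then p / (1 + p) else 1 / (1 + p)) *
  (\prod_(1 <= j < (if cyc then k.-1 else k)) ap_step p (w j.-1) (w j)) *
  (if cyc then ((w k.-1) == (~~ w 0%N && ~~ w (k - 2)%N))%:R else 1) *
  (\prod_(k <= j < #|T|.+1) (~~ w j)%:R).

(** Sample space: one indicator per (component, edge index); edge indices are
    bounded by #|T| (components are simple paths/cycles), extra entries padded. *)
Definition Wspace (m : nat) := {ffun 'I_m -> {ffun 'I_(#|T|.+1) -> bool}}.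

Definition Wv {m : nat} (W : Wspace m) (i : 'I_m) (j : nat) : bool :=
  (j < #|T|.+1)%N && W i (inord j).

Definition comp (cs : seq (seq T)) (i : nat) : seq T := nth [::] cs i.
Definition edge (cs : seq (seq T)) (i j : nat) : {set T} :=
  nth set0 (edges (comp cs i)) j.

Definition design_prob (p : R) (cs : seq (seq T)) (W : Wspace (size cs)) : R :=
  \prod_(i < size cs)
     comp_pmf p (nedges (comp cs i)) (is_cycle (comp cs i)) (Wv W i).

Definition expect (p : R) (cs : seq (seq T)) (f : Wspace (size cs) -> R) : R :=
  \sum_(W : Wspace (size cs)) design_prob p cs W * f W.

Definition marg (p : R) (cs : seq (seq T)) (i : 'I_(size cs)) (j : nat) : R :=
  \sum_(W : Wspace (size cs) | Wv W i j) design_prob p cs W.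

Definition tau_AP (N : nat) (Mt Mc : {set {set T}}) (Y : {set T} -> R) (p : R)
    (cs : seq (seq T)) (W : Wspace (size cs)) : R :=
  N%:R^-1 * \sum_(i < size cs)
    ((\sum_(j < nedges (comp cs i) | edge cs i j \in disagree Mt Mc :&: Mt)
        (Wv W i j)%:R * Y (edge cs i j) / marg p cs i j) -
     (\sum_(j < nedges (comp cs i) | edge cs i j \in disagree Mt Mc :&: Mc)
        (Wv W i j)%:R * Y (edge cs i j) / marg p cs i j)).

Definition tau (N : nat) (Mt Mc : {set {set T}}) (Y : {set T} -> R) : R :=
  N%:R^-1 * (\sum_(e in Mt) Y e - \sum_(e in Mc) Y e).

End AP.

From Pilot Require Import Defs.
From HB Require Import structures.
From mathcomp Require Import all_boot all_order all_algebra.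
From mathcomp Require Import zify.
Import Order.TTheory GRing.Theory Num.Theory.
Local Open Scope ring_scope.

(* Taking expectations term by term, each Horvitz-Thompson summand
   W_{i,j} Y_e / P(W_{i,j} = 1) has mean Y_e as soon as the marginal
   P(W_{i,j} = 1) is positive, which the configuration treating edge j alone
   (plus the forced closing edge of a cycle) shows, since its probability is
   positive for 0 < p < 1.  The components are
   vertex-disjoint simple paths and cycles covering the disagreement set, so
   each disagreement edge is some e_{i,j} for exactly one pair (i, j).  The
   expectation is therefore (sum_{Mt \ Mc} Y - sum_{Mc \ Mt} Y) / N, and the
   edges common to both matchings cancel in tau. *)

Section Edges.
Context {T : finType}.
Implicit Types (s : seq T) (e : {set T}).

Lemma edges_cons2 x y s : edges [:: x, y & s] = [set x; y] :: edges (y :: s).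
Proof. by []. Qed.

Lemma size_edges s : size (edges s) = nedges s.
Proof. by case: s => [|x s] //=; rewrite size_pairmap. Qed.

Lemma edges_subset s e : e \in edges s -> {subset e <= s}.
Proof.
elim: s => [|x s IH] //; case: s IH => [|y s] IH //.
rewrite edges_cons2 inE => /orP[/eqP-> z|/IH sub z /sub]; last first.
  by move=> z_ys; rewrite inE z_ys orbT.
by rewrite !inE => /orP[]->; rewrite ?orbT.
Qed.

Lemma uniq_edges s : uniq s -> uniq (edges s).
Proof.
elim: s => [|x s IH] //; case: s IH => [|y s] IH // /andP[xNys ys_uniq].
rewrite edges_cons2 cons_uniq IH // andbT.
by apply: contra xNys => /edges_subset/(_ x); apply; rewrite set21.
Qed.

Lemma uniq_edges_cycle s :
  is_cycle s -> uniq (behead s) -> size s != 3%N -> uniq (edges s).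
Proof.
case: s => [|x [|y [|z t]]] // /andP[_ /eqP last_x].
have {}last_x : last z t = x := last_x.
move=> /[dup] yzt_uniq /andP[yNzt zt_uniq] size_neq3.
rewrite edges_cons2 cons_uniq.
rewrite uniq_edges // andbT edges_cons2 inE negb_or; apply/andP; split.
  have x_zt : x \in z :: t by rewrite -last_x mem_last.
  apply/negP => /eqP xy_yz; have : x \in [set y; z] by rewrite -xy_yz set21.
  rewrite !inE => /orP[/eqP x_y|/eqP x_z]; first by rewrite -x_y x_zt in yNzt.
  case: t {yzt_uniq yNzt xy_yz} last_x x_zt zt_uniq size_neq3 => [|w t] //.
  move=> last_x _ /andP[zNwt _] _.
  by move: zNwt; rewrite -x_z -last_x /= mem_last.
by apply: contra yNzt => /edges_subset/(_ y); apply; rewrite set22.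
Qed.

End Edges.

Lemma size_uniq_leq_card (T : finType) (s : seq T) : uniq s -> (size s <= #|T|)%N.
Proof. by move/card_uniqP <-; apply: max_card. Qed.

Lemma sum_weighted_indicator (R : fieldType) (I : finType) (P : I -> R)
    (A : pred I) (y : R) :
  \sum_(i | A i) P i != 0 ->
  \sum_i P i * ((A i)%:R * y / \sum_(i | A i) P i) = y.
Proof.
move=> PA_neq0; under eq_bigr do rewrite 2!mulrA.
rewrite -2!mulr_suml.
have -> : \sum_i P i * (A i)%:R = \sum_(i | A i) P i.
  rewrite [RHS]big_mkcond; apply: eq_bigr => i _.
  by case: (A i); rewrite ?mulr1 ?mulr0.
by rewrite mulrC mulKf.
Qed.

Lemma sum_nth_eq (R : pzSemiRingType) (T : eqType) (x0 : T) (s : seq T) (x : T) :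
  uniq s -> \sum_(j < size s) ((nth x0 s j == x)%:R : R) = (x \in s)%:R.
Proof.
elim: s => [|y s IH] /=; first by rewrite big_ord0.
move=> /andP[yNs s_uniq]; rewrite big_ord_recl /= IH // inE.
by case: (eqVneq y x) => [<-|_]; rewrite ?(negbTE yNs) ?addr0 ?add0r.
Qed.

Lemma sumB_setD (R : zmodType) (I : finType) (A B : {set I}) (F : I -> R) :
  \sum_(i in A :\: B) F i - \sum_(i in B :\: A) F i =
  \sum_(i in A) F i - \sum_(i in B) F i.
Proof.
rewrite (big_setID B (A := A)) (big_setID A (A := B)) /= setIC.
by rewrite opprD addrACA subrr add0r.
Qed.

Lemma sum_mul_indicator (R : pzSemiRingType) (I : finType) (S : {set I})
    (F : I -> R) x :
  \sum_(i in S) F i * (x == i)%:R = if x \in S then F x else 0.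
Proof.
rewrite big_mkcond (bigD1 x) //= big1 => [|i /negbTE iNx]; last first.
  by rewrite eq_sym iNx mulr0 if_same.
by rewrite eqxx mulr1 addr0.
Qed.

Lemma disagreeIl (T : finType) (A B : {set {set T}}) :
  disagree A B :&: A = A :\: B.
Proof. by apply/setP => e; rewrite !inE; case: (e \in A); case: (e \in B). Qed.

Lemma disagreeIr (T : finType) (A B : {set {set T}}) :
  disagree A B :&: B = B :\: A.
Proof. by apply/setP => e; rewrite !inE; case: (e \in A); case: (e \in B). Qed.

Section DesignPositivity.
Variables (T : finType) (R : realFieldType) (p : R).
Hypothesis p01 : 0 < p < 1.

Lemma ap_step_ge0 a b : 0 <= ap_step p a b.
Proof.
by case/andP: p01 => p_gt0 p_lt1; case: a; case: b; rewrite //= ?subr_ge0 ltW.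
Qed.

Lemma ap_step_gt0 a b : ~~ (a && b) -> 0 < ap_step p a b.
Proof. by case/andP: p01 => p_gt0 p_lt1; case: a; case: b; rewrite //= subr_gt0. Qed.

Lemma comp_pmf_ge0 k cyc w : 0 <= comp_pmf (T := T) p k cyc w.
Proof.
have /andP[p_gt0 _] := p01.
rewrite /comp_pmf !mulr_ge0 ?prodr_ge0 // => [|l _|].
- by case: ifP => _; rewrite divr_ge0 ?addr_ge0 ?ltW.
- exact: ap_step_ge0.
- by case: ifP; rewrite ?ler0n.
Qed.

(* The indicator vector with a single treated edge j; on a cycle the closing
   edge k-1 is forced to 1 as soon as both its neighbours 0 and k-2 are 0. *)
Definition ap_witness (k : nat) (cyc : bool) (j : nat) : nat -> bool :=
  fun l => (l == j) || [&& cyc, l == k.-1, j != 0%N & j != (k - 2)%N].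

Lemma comp_pmf_witness_gt0 k (cyc : bool) j : (j < k)%N -> (cyc -> 1 < k)%N ->
  0 < comp_pmf (T := T) p k cyc (ap_witness k cyc j).
Proof.
move=> j_lt k_gt1; have /andP[p_gt0 _] := p01.
rewrite /comp_pmf /ap_witness !mulr_gt0 //.
- by case: ifP => _; rewrite divr_gt0 ?addr_gt0.
- rewrite big_seq; apply: prodr_gt0 => l; rewrite mem_index_iota => l_range.
  by apply: ap_step_gt0; case: cyc k_gt1 l_range => /= k_gt1; lia.
- by case: cyc k_gt1 => [/(_ isT) k_gt1|_] //; rewrite ltr0n lt0b; lia.
- rewrite big_seq; apply: prodr_gt0 => l; rewrite mem_index_iota => l_range.
  by rewrite ltr0n lt0b; lia.
Qed.

Lemma eq_comp_pmf k cyc w1 w2 : w1 =1 w2 ->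
  comp_pmf (T := T) p k cyc w1 = comp_pmf (T := T) p k cyc w2.
Proof.
move=> w12; rewrite /comp_pmf !w12.
by congr (_ * _ * _ * _); apply: eq_bigr => l _; rewrite !w12.
Qed.

End DesignPositivity.

Arguments eq_comp_pmf {T R p k cyc w1 w2}.

Section Components.
Context {T : finType} {Mt Mc : {set {set T}}} {cs : seq (seq T)}.
Hypotheses (Mt_matching : is_matching Mt) (Mc_matching : is_matching Mc)
  (cs_components : components_of Mt Mc cs).

Lemma mem_comp (i : 'I_(size cs)) : Defs.comp cs i \in cs.
Proof. exact: mem_nth. Qed.

Lemma card_disagree e : e \in disagree Mt Mc -> #|e| = 2%N.
Proof.
case: Mt_matching Mc_matching => [Mt_card _] [Mc_card _].
by rewrite !inE => /andP[_ /orP[/Mt_card|/Mc_card]].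
Qed.

Lemma nedges_component s : s \in cs ->
  [/\ (0 < nedges s)%N, is_cycle s -> (1 < nedges s)%N & (nedges s <= #|T|)%N].
Proof.
case: cs_components => c_edges _ c_simple _ _ s_cs.
have [size_ge2 c_disagree] := c_edges _ s_cs; have s_simple := c_simple _ s_cs.
rewrite /nedges; split; first by case: (size s) size_ge2 => [|[]].
  case: s {s_cs s_simple} size_ge2 c_disagree => [|x [|y [|z t]]] // _ c_disagree.
  case/andP=> _ /eqP /= y_x; have := card_disagree _ (c_disagree _ (mem_head _ _)).
  by rewrite y_x setUid cards1.
move: s_simple; case: ifP => _ /size_uniq_leq_card.
  by rewrite size_behead.
exact: leq_trans (leq_pred _).
Qed.

Lemma uniq_edges_component s : s \in cs -> uniq (edges s).
Proof.
case: cs_components => _ c_alternate c_simple _ _ s_cs.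
move: (c_simple _ s_cs); case: ifP => [s_cycle|_]; last exact: uniq_edges.
(* a cycle x y x would use the edge {x, y} twice, against alternation *)
move/uniq_edges_cycle; apply=> //; apply/negP => /eqP size3.
have := c_alternate _ s_cs 0%N; rewrite /nedges size3 => /(_ isT).
case: s s_cs s_cycle size3 => [|x [|y [|z []]]] // _ /andP[_ /eqP /= ->] _.
by rewrite setUC eqxx.
Qed.

Lemma edge_multiplicity (R : pzSemiRingType) e : e \in disagree Mt Mc ->
  \sum_(i < size cs) \sum_(j < nedges (Defs.comp cs i)) ((edge cs i j == e)%:R : R)
  = 1.
Proof.
case: cs_components => _ _ _ c_disjoint c_cover e_disagree.
have inner (i : 'I_(size cs)) :
    \sum_(j < nedges (Defs.comp cs i)) ((edge cs i j == e)%:R : R)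
    = (e \in edges (Defs.comp cs i))%:R.
  by rewrite -size_edges sum_nth_eq // uniq_edges_component // mem_comp.
under eq_bigr do rewrite inner.
have [s s_cs e_s] := c_cover e e_disagree.
have i0_lt : (index s cs < size cs)%N by rewrite index_mem.
have comp_i0 : Defs.comp cs (Ordinal i0_lt) = s by apply: nth_index.
rewrite (bigD1 (Ordinal i0_lt)) //= comp_i0 e_s big1 ?addr0 // => i i_neq.
have /card_gt0P[x x_e] : (0 < #|e|)%N by rewrite card_disagree.
suff -> : (e \in edges (Defs.comp cs i)) = false by [].
apply/negP => /edges_subset/(_ x x_e) x_i.
have i_neq' : (i : nat) <> index s cs.
  by move=> i_eq; move/eqP: i_neq; apply; apply: val_inj.
have := disjointFr (c_disjoint _ _ (ltn_ord i) i0_lt i_neq') x_i.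
by rewrite -/(Defs.comp cs (Ordinal i0_lt)) comp_i0 (edges_subset _ _ e_s).
Qed.

Lemma sum_over_components (R : pzSemiRingType) (F : {set T} -> R)
    (S : {set {set T}}) :
  S \subset disagree Mt Mc ->
  \sum_(i < size cs) \sum_(j < nedges (Defs.comp cs i) | edge cs i j \in S)
     F (edge cs i j)
  = \sum_(e in S) F e.
Proof.
move=> S_disagree; transitivity (\sum_(e in S) F e *
    \sum_(i < size cs) \sum_(j < nedges (Defs.comp cs i)) (edge cs i j == e)%:R).
  under [RHS]eq_bigr do rewrite mulr_sumr; rewrite exchange_big.
  apply: eq_bigr => i _; under [RHS]eq_bigr do rewrite mulr_sumr.
  rewrite exchange_big big_mkcond; apply: eq_bigr => j _.
  by rewrite sum_mul_indicator.
apply: eq_bigr => e e_S.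
by rewrite edge_multiplicity ?mulr1 // (subsetP S_disagree).
Qed.

Context {R : realFieldType} {p : R}.
Hypothesis p01 : 0 < p < 1.

Lemma marg_gt0 (i : 'I_(size cs)) j : (j < nedges (Defs.comp cs i))%N ->
  0 < marg p cs i j.
Proof.
move=> j_lt; pose J (i' : 'I_(size cs)) := if i' == i then j else 0%N.
have J_lt i' : (J i' < nedges (Defs.comp cs i'))%N.
  have [k_gt0 _ _] := nedges_component _ (mem_comp i').
  by rewrite /J; case: eqP => [->|].
pose w (i' : 'I_(size cs)) :=
  ap_witness (nedges (Defs.comp cs i')) (is_cycle (Defs.comp cs i')) (J i').
pose W0 : Wspace (size cs) := [ffun i' => [ffun l : 'I_#|T|.+1 => w i' l]].
have W0_witness i' : Wv W0 i' =1 w i'.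
  move=> l; rewrite /Wv !ffunE; case: ltnP => l_range /=; first by rewrite inordK.
  have [_ _ k_le] := nedges_component _ (mem_comp i').
  by move: (J_lt i'); rewrite /w /ap_witness; lia.
have W0_gt0 : 0 < design_prob p cs W0.
  apply: prodr_gt0 => i' _; rewrite (eq_comp_pmf (W0_witness i')).
  have [_ k_gt1 _] := nedges_component _ (mem_comp i').
  exact: comp_pmf_witness_gt0.
rewrite /marg (bigD1 W0) ?W0_witness /w /ap_witness /J ?eqxx //=.
rewrite ltr_wpDr // sumr_ge0 // => W _.
by rewrite prodr_ge0 // => i' _; apply: comp_pmf_ge0.
Qed.

Lemma expect_HT_sum (i : 'I_(size cs)) (S : {set {set T}}) (Y : {set T} -> R) :
  \sum_W design_prob p cs W *
    (\sum_(j < nedges (Defs.comp cs i) | edge cs i j \in S)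
       (Wv W i j)%:R * Y (edge cs i j) / marg p cs i j)
  = \sum_(j < nedges (Defs.comp cs i) | edge cs i j \in S) Y (edge cs i j).
Proof.
under eq_bigr do rewrite mulr_sumr.
rewrite exchange_big; apply: eq_bigr => j _.
by apply: sum_weighted_indicator; rewrite gt_eqF ?marg_gt0.
Qed.

Lemma expect_tau_AP N (Y : {set T} -> R) :
  expect p cs (tau_AP N Mt Mc Y p cs) =
  N%:R^-1 * \sum_(i < size cs)
    (\sum_(j < nedges (Defs.comp cs i) | edge cs i j \in disagree Mt Mc :&: Mt)
       Y (edge cs i j) -
     \sum_(j < nedges (Defs.comp cs i) | edge cs i j \in disagree Mt Mc :&: Mc)
       Y (edge cs i j)).
Proof.
rewrite /expect /tau_AP; under eq_bigr do rewrite mulrCA.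
rewrite -mulr_sumr; congr (_ * _); under eq_bigr do rewrite mulr_sumr.
rewrite exchange_big; apply: eq_bigr => i _.
by rewrite -!expect_HT_sum -sumrB; apply: eq_bigr => W _; rewrite mulrBr.
Qed.

End Components.

Theorem proposition4 (T : finType) (R : realFieldType) (N : nat)
  (Mt Mc : {set {set T}}) (Y : {set T} -> R) (cs : seq (seq T)) (p : R) :
  #|T| = N.*2 ->
  is_matching Mt -> is_matching Mc ->
  components_of Mt Mc cs ->
  0 < p < 1 ->
  expect p cs (tau_AP N Mt Mc Y p cs) = tau N Mt Mc Y.
Proof.
(* |T| = 2N only names the normalisation 1/N *)
move=> _ Mt_matching Mc_matching cs_components p01.
have sum_components := sum_over_components Mt_matching Mc_matching cs_components.
rewrite (expect_tau_AP Mt_matching Mc_matching cs_components p01) sumrB.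
rewrite !sum_components ?subsetIl //.
by rewrite disagreeIl disagreeIr sumB_setD.
Qed.
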